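(* $\mathsf{ConC}_{[0,1]}\equiv_{sW}\overline{\mathsf{ConC}_{[0,1]}}\equiv_{sW}\mathsf{T}\mathsf{ConC}_{[0,1]}$.
   Context: A problem $f:\subseteq X\rightrightarrows Y$ between represented spaces is a partial multi-valued map; $F\vdash f$ means $\delta_YF(p)\in f(\delta_X(p))$ whenever $\delta_X(p)\in\mathrm{dom}(f)$; $f\le_{sW}g$ iff there are computable $H,K$ with $HGK\vdash f$ for all $G\vdash g$. $[0,1]$ is a computable metric space with the Cauchy representation; $\mathcal A_-([0,1])$ is the space of closed subsets represented by $p\mapsto[0,1]\setminus\bigcup_nB_{p(n)}$ where $(B_n)$ is a standard enumeration of rational open balls (including empty ones). $\mathsf{ConC}_{[0,1]}:\subseteq\mathcal A_-([0,1])\rightrightarrows[0,1]$, $A\mapsto A$, is defined exactly on the nonempty connected closed sets. For $p\in\mathbb{N}^\mathbb{N}$, $p-1$ is the concatenation of $p(0)-1,p(1)-1,\dots$ with $0-1$ the empty word; the completion of $(X,\delta_X)$ is $\overline X=X\cup\{\bot\}$ with $\delta_{\overline X}(p)=\delta_X(p-1)$ if $p-1$ is an infinite sequence in $\mathrm{dom}(\delta_X)$ and $\bot$ otherwise. For $f:\subseteq X\rightrightarrows Y$: $\overline f:\overline X\rightrightarrows\overline Y$ equals $f$ on $\mathrm{dom}(f)$ and $\overline Y$ elsewhere; $\mathsf Tf:X\rightrightarrows Y$ equals $f$ on $\mathrm{dom}(f)$ and $Y$ elsewhere. *)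

From Stdlib Require Import Reals QArith Qreals Arith Lia Cantor.
From Stdlib Require Import Rtopology.
Open Scope R_scope.

Definition baire := nat -> nat.

(* Codes of (unary) partial recursive functions, with Cantor pairing. *)
Inductive prf : Type :=
| PZero | PSucc | PId | PFst | PSnd
| PPair (f g : prf)
| PComp (f g : prf)
| PRec (f g : prf)           (* <x,0> |-> f x ; <x,m+1> |-> g <x,<m, h<x,m>>> *)
| PMu (f : prf).             (* x |-> least n with f<x,n> = 0 (earlier values defined) *)

Inductive peval : prf -> nat -> nat -> Prop :=
| ev_zero x : peval PZero x 0
| ev_succ x : peval PSucc x (S x)
| ev_id x : peval PId x x
| ev_fst x : peval PFst x (fst (Cantor.of_nat x))
| ev_snd x : peval PSnd x (snd (Cantor.of_nat x))
| ev_pair f g x a b : peval f x a -> peval g x b ->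
    peval (PPair f g) x (Cantor.to_nat (a, b))
| ev_comp f g x y z : peval g x y -> peval f y z -> peval (PComp f g) x z
| ev_rec0 f g x v : peval f x v -> peval (PRec f g) (Cantor.to_nat (x, 0%nat)) v
| ev_recS f g x m w v : peval (PRec f g) (Cantor.to_nat (x, m)) w ->
    peval g (Cantor.to_nat (x, Cantor.to_nat (m, w))) v ->
    peval (PRec f g) (Cantor.to_nat (x, S m)) v
| ev_mu f x n : peval f (Cantor.to_nat (x, n)) 0%nat ->
    (forall m, (m < n)%nat -> exists k, peval f (Cantor.to_nat (x, m)) (S k)) ->
    peval (PMu f) x n.

Fixpoint code_list (l : list nat) : nat :=
  match l with nil => 0%nat | cons a l => S (Cantor.to_nat (a, code_list l)) end.

Fixpoint prefix (p : baire) (k : nat) : list nat :=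
  match k with 0%nat => nil | S k => app (prefix p k) (cons (p k) nil) end.

(* The partial function Baire -> Baire computed by the (type-2) machine e:
   on input p, the n-th output symbol is v whenever e(<p|k, n>) = v+1 for
   some prefix length k (0 meaning "no output yet"). *)
Definition Phi (e : prf) (p q : baire) : Prop :=
  forall n : nat,
    (exists k, peval e (Cantor.to_nat (code_list (prefix p k), n)) (S (q n))) /\
    (forall k v, peval e (Cantor.to_nat (code_list (prefix p k), n)) (S v) -> v = q n).

Record rep_space := { car : Type; rep : baire -> car -> Prop }.

(* a (partial multi-valued) problem f :⊆ X ⇉ Y, as a relation; dom f = {x | f x ≠ ∅} *)
Definition problem (X Y : rep_space) := car X -> car Y -> Prop.
Definition pdom {X Y : rep_space} (f : problem X Y) (x : car X) : Prop :=
  exists y, f x y.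

Definition functional (F : baire -> baire -> Prop) : Prop :=
  forall p q1 q2, F p q1 -> F p q2 -> q1 = q2.

Definition realizes {X Y : rep_space} (F : baire -> baire -> Prop) (f : problem X Y) : Prop :=
  forall p x, rep X p x -> pdom f x ->
    exists q, F p q /\ exists y, rep Y q y /\ f x y.

Definition comp3 (H G K : baire -> baire -> Prop) (p t : baire) : Prop :=
  exists r s, K p r /\ G r s /\ H s t.

Definition sW_le {X Y U V : rep_space} (f : problem X Y) (g : problem U V) : Prop :=
  exists eH eK : prf,
    forall G : baire -> baire -> Prop, functional G -> realizes G g ->
      realizes (comp3 (Phi eH) G (Phi eK)) f.

Definition sW_equiv {X Y U V : rep_space} (f : problem X Y) (g : problem U V) : Prop :=
  sW_le f g /\ sW_le g f.

Definition minus1 (p q : baire) : Prop :=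
  exists s : nat -> nat,
    (forall n, (s n < s (S n))%nat) /\
    (forall i, p i <> 0%nat <-> exists n, s n = i) /\
    (forall n, q n = (p (s n) - 1)%nat).

Definition completion (X : rep_space) : rep_space :=
  {| car := option (car X);
     rep := fun p ox => match ox with
                        | Some x => exists q, minus1 p q /\ rep X q x
                        | None => ~ exists q x, minus1 p q /\ rep X q x
                        end |}.

Definition pbar {X Y : rep_space} (f : problem X Y) : problem (completion X) (completion Y) :=
  fun ox oy => match ox with
               | Some x => (pdom f x /\ exists y, oy = Some y /\ f x y) \/ ~ pdom f x
               | None => True
               end.

Definition ptot {X Y : rep_space} (f : problem X Y) : problem X Y :=
  fun x y => f x y \/ ~ pdom f x.

Definition nuQ (n : nat) : Q :=
  let (a, b) := Cantor.of_nat n in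
  let (c, d) := Cantor.of_nat a in
  Qmake (Z.of_nat c - Z.of_nat d)%Z (Pos.of_succ_nat b).

Definition unit_interval : rep_space :=
  {| car := R;
     rep := fun p x => 0 <= x <= 1 /\
                       forall i, Rabs (x - Q2R (nuQ (p i))) <= (/ 2) ^ i |}.

(* standard enumeration of rational open balls (radius <= 0 gives the empty ball) *)
Definition ball (n : nat) (x : R) : Prop :=
  let (a, b) := Cantor.of_nat n in
  Rabs (x - Q2R (nuQ a)) < Q2R (nuQ b).

Definition closed_neg : rep_space :=
  {| car := R -> Prop;
     rep := fun p A => forall x, A x <-> ((0 <= x <= 1) /\ forall n, ~ ball (p n) x) |}.

Definition connected (A : R -> Prop) : Prop :=
  ~ exists U V : R -> Prop,
      open_set U /\ open_set V /\
      (forall x, A x -> U x \/ V x) /\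
      (exists x, A x /\ U x) /\ (exists x, A x /\ V x) /\
      (forall x, ~ (A x /\ U x /\ V x)).

Definition ConC : problem closed_neg unit_interval :=
  fun A x => A x /\ (exists y, A y) /\ connected A.

From Stdlib Require Import Reals Qreals ZArith Lia Lra Cantor List Rtopology.
Import ListNotations.

(* Given any name p of a closed set, one can compute a name of a nonempty closed interval
   hull(p): with lo_j and hi_j the least and the greatest point of [0,1] outside the first j
   balls listed by p (both computed exactly by a rational sweep), hull(p) is the intersection
   of the nested intervals [lo_j, hi_j] over the j with lo_j <= 1. It is always nonempty and
   convex, hence a valid input of ConC, and it is contained in the set A named by p whenever
   A is nonempty and connected: a point of hull(p) outside A has all of A on one side, so by
   compactness finitely many balls cover the segment between it and the far end of [0,1],
   which pushes lo_j or hi_j past it.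
   Hence ConC applied to hull(p) solves both the completion and the totalization of ConC.
   The remaining reductions are generic: f <= bar f by adding and removing 1 on names, and
   realizers of T g realize g. *)

(* The machines are written in this language of primitive recursive terms over
   Cantor-paired naturals and compiled to [prf]. *)
Inductive expr : Type :=
| EVar (i : nat) | EZero | ESucc (e : expr) | EPair (a b : expr) | EFst (e : expr)
| ESnd (e : expr) | EIter (n i s : expr).

(* In [EIter n i s] the step [s] sees the previous value as [EVar 0] and the counter as
   [EVar 1]; the outer variables are shifted by two. *)
Fixpoint interp (e : expr) (env : list nat) : nat :=
  match e with
  | EVar i => nth i env 0%nat
  | EZero => 0%nat
  | ESucc e => S (interp e env)
  | EPair a b => Cantor.to_nat (interp a env, interp b env)
  | EFst e => fst (Cantor.of_nat (interp e env))
  | ESnd e => snd (Cantor.of_nat (interp e env))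
  | EIter n i s => nat_rect (fun _ => nat) (interp i env)
                     (fun m h => interp s (h :: m :: env)) (interp n env)
  end.

Fixpoint enc_env (l : list nat) : nat :=
  match l with nil => 0%nat | x :: l => Cantor.to_nat (x, enc_env l) end.

Fixpoint psnd_iter (i : nat) : prf :=
  match i with 0%nat => PId | S i => PComp (psnd_iter i) PSnd end.

Definition rec_shuffle : prf := PPair (PComp PSnd PSnd) (PPair (PComp PFst PSnd) PFst).

Fixpoint compile (e : expr) : prf :=
  match e with
  | EVar i => PComp PFst (psnd_iter i)
  | EZero => PZero
  | ESucc e => PComp PSucc (compile e)
  | EPair a b => PPair (compile a) (compile b)
  | EFst e => PComp PFst (compile e)
  | ESnd e => PComp PSnd (compile e)
  | EIter n i s =>
      PComp (PRec (compile i) (PComp (compile s) rec_shuffle)) (PPair PId (compile n))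
  end.

Lemma of_nat0 : Cantor.of_nat 0 = (0%nat, 0%nat). Proof. reflexivity. Qed.

Opaque Cantor.to_nat Cantor.of_nat.

Lemma peval_fst_pair a b : peval PFst (Cantor.to_nat (a, b)) a.
Proof. generalize (ev_fst (Cantor.to_nat (a, b))). now rewrite Cantor.cancel_of_to. Qed.

Lemma peval_snd_pair a b : peval PSnd (Cantor.to_nat (a, b)) b.
Proof. generalize (ev_snd (Cantor.to_nat (a, b))). now rewrite Cantor.cancel_of_to. Qed.

Lemma psnd_iter_correct i env : peval (psnd_iter i) (enc_env env) (enc_env (skipn i env)).
Proof.
  revert env; induction i as [|i IHi]; intros env; simpl; [constructor|].
  econstructor; [apply ev_snd|]. destruct env as [|x l]; simpl.
  - specialize (IHi []). destruct i; exact IHi.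
  - rewrite Cantor.cancel_of_to. apply IHi.
Qed.

Lemma rec_shuffle_correct x m h :
  peval rec_shuffle (Cantor.to_nat (x, Cantor.to_nat (m, h)))
    (Cantor.to_nat (h, Cantor.to_nat (m, x))).
Proof.
  repeat constructor; try apply peval_fst_pair;
    econstructor; (apply peval_snd_pair || apply peval_fst_pair).
Qed.

Lemma nth_enc_env i env : fst (Cantor.of_nat (enc_env (skipn i env))) = nth i env 0%nat.
Proof.
  revert env; induction i as [|i IHi]; intros [|x l]; simpl; try rewrite of_nat0; auto.
  now rewrite Cantor.cancel_of_to.
Qed.

Lemma compile_correct e env : peval (compile e) (enc_env env) (interp e env).
Proof.
  revert env; induction e as [i| |e IHe|a IHa b IHb|e IHe|e IHe|n IHn i IHi s IHs];
    intros env; simpl; try (econstructor; [apply IHe | constructor]).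
  - econstructor; [apply psnd_iter_correct|]. rewrite <- nth_enc_env. apply ev_fst.
  - constructor.
  - constructor; auto.
  - econstructor; [apply ev_pair; [constructor | apply IHn]|].
    induction (interp n env) as [|m IHm]; simpl; [now constructor|].
    eapply ev_recS; [apply IHm|].
    econstructor; [apply rec_shuffle_correct | apply (IHs (_ :: m :: env))].
Qed.

Definition deterministic (e : prf) : Prop :=
  forall x v1 v2, peval e x v1 -> peval e x v2 -> v1 = v2.

Lemma peval_rec0_inv f g x v : peval (PRec f g) (Cantor.to_nat (x, 0%nat)) v -> peval f x v.
Proof.
  intros H. remember (Cantor.to_nat (x, 0%nat)) as y eqn:Ey. remember (PRec f g) as e eqn:Ee.
  destruct H; try discriminate; injection Ee as -> ->; apply Cantor.to_nat_inj in Ey.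
  - now injection Ey as ->.
  - discriminate.
Qed.

Lemma peval_recS_inv f g x m v : peval (PRec f g) (Cantor.to_nat (x, S m)) v ->
  exists w, peval (PRec f g) (Cantor.to_nat (x, m)) w /\
            peval g (Cantor.to_nat (x, Cantor.to_nat (m, w))) v.
Proof.
  intros H. remember (Cantor.to_nat (x, S m)) as y eqn:Ey. remember (PRec f g) as e eqn:Ee.
  destruct H; try discriminate; injection Ee as -> ->; apply Cantor.to_nat_inj in Ey.
  - discriminate.
  - injection Ey as -> ->. eauto.
Qed.

Lemma rec_deterministic f g : deterministic f -> deterministic g -> deterministic (PRec f g).
Proof.
  intros Hf Hg y v1 v2. rewrite <- (Cantor.cancel_to_of y). destruct (Cantor.of_nat y) as [x m].
  revert v1 v2. induction m as [|m IHm]; intros v1 v2 H1 H2.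
  - apply peval_rec0_inv in H1, H2; eauto.
  - apply peval_recS_inv in H1 as [w1 [A1 B1]]; apply peval_recS_inv in H2 as [w2 [A2 B2]].
    assert (w1 = w2) by eauto; subst; eauto.
Qed.

Lemma mu_deterministic f : deterministic f -> deterministic (PMu f).
Proof.
  intros Hf x v1 v2 H1 H2. inversion H1 as [| | | | | | | | |? ? ? A1 B1]; subst.
  inversion H2 as [| | | | | | | | |? ? ? A2 B2]; subst.
  destruct (Nat.lt_trichotomy v1 v2) as [Hl|[Hl|Hl]]; auto.
  - destruct (B2 _ Hl) as [k Hk]. specialize (Hf _ _ _ A1 Hk); discriminate.
  - destruct (B1 _ Hl) as [k Hk]. specialize (Hf _ _ _ A2 Hk); discriminate.
Qed.

Lemma peval_deterministic e : deterministic e.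
Proof.
  induction e; try (apply rec_deterministic; auto); try (apply mu_deterministic; auto);
  intros x v1 v2 H1 H2; inversion H1; inversion H2; subst; auto.
  - f_equal; eauto.
  - assert (y = y0) by eauto; subst; eauto.
Qed.

(* A machine reads [<c, n>], with [c] the code of a finite prefix of the input and [n] the
   index of the requested output symbol, as the environment [[c; n]]. *)
Definition machine (M : expr) : prf := PComp (compile M) (PPair PFst (PPair PSnd PZero)).

Lemma machine_correct M c n : peval (machine M) (Cantor.to_nat (c, n)) (interp M [c; n]).
Proof.
  econstructor; [|apply (compile_correct M [c; n])].
  repeat constructor; [apply peval_fst_pair | apply peval_snd_pair].
Qed.

Lemma Phi_machine M p q :
  (forall n, (exists k, interp M [code_list (prefix p k); n] = S (q n)) /\
             (forall k v, interp M [code_list (prefix p k); n] = S v -> v = q n)) ->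
  Phi (machine M) p q.
Proof.
  intros H n. destruct (H n) as [[k Hk] H2]. split.
  - exists k. rewrite <- Hk. apply machine_correct.
  - intros k' v Hv. apply (H2 k'). eapply peval_deterministic; [apply machine_correct | apply Hv].
Qed.

(* Shifts the variables from index [c] on by two, so that a term can be used under the
   binders of an [EIter]. *)
Fixpoint lift2 (c : nat) (e : expr) : expr :=
  match e with
  | EVar i => if Nat.ltb i c then EVar i else EVar (S (S i))
  | EZero => EZero
  | ESucc e => ESucc (lift2 c e)
  | EPair a b => EPair (lift2 c a) (lift2 c b)
  | EFst e => EFst (lift2 c e)
  | ESnd e => ESnd (lift2 c e)
  | EIter n i s => EIter (lift2 c n) (lift2 c i) (lift2 (S (S c)) s)
  end.

Lemma interp_lift2 e c env a b : (c <= length env)%nat ->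
  interp (lift2 c e) (firstn c env ++ a :: b :: skipn c env) = interp e env.
Proof.
  revert c env; induction e as [i| |e IHe|e1 IH1 e2 IH2|e IHe|e IHe|n IHn i IHi s IHs];
    intros c env Hc; simpl; try (f_equal; auto; fail).
  - destruct (Nat.ltb_spec i c); simpl.
    + rewrite app_nth1, nth_firstn by (rewrite length_firstn; lia).
      destruct (Nat.ltb_spec i c); [reflexivity | lia].
    + rewrite app_nth2; rewrite length_firstn; [|lia].
      replace (S (S i) - Nat.min c (length env))%nat with (S (S (i - c))) by lia.
      simpl. rewrite nth_skipn. f_equal. lia.
  - rewrite IHn, IHi by auto.
    induction (interp n env) as [|m IHm]; simpl; auto.
    rewrite <- IHm. apply (IHs (S (S c)) (_ :: m :: env)). simpl. lia.
Qed.

Lemma interp_lift2_0 e h m env : interp (lift2 0 e) (h :: m :: env) = interp e env.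
Proof. apply (interp_lift2 e 0 env h m). lia. Qed.

Definition EOne := ESucc EZero.
Definition EPred x := EIter x EZero (EVar 1).
Definition EAdd a b := EIter b a (ESucc (EVar 0)).
Definition ESub a b := EIter b a (EPred (EVar 0)).
Definition EMul a b := EIter b EZero (EAdd (EVar 0) (lift2 0 a)).
Definition EIfz c a b := EIter c a (lift2 0 b).
Definition EIf c a b := EIfz c b a.
Definition ELt a b := EIfz (ESub (ESucc a) b) EOne EZero.
Definition EEq a b := EIfz (ESub a b) (EIfz (ESub b a) EOne EZero) EZero.
Definition ELet a body := EIter EOne a body.

Lemma interp_EOne env : interp EOne env = 1%nat.
Proof. reflexivity. Qed.

Lemma interp_EPred x env : interp (EPred x) env = pred (interp x env).
Proof. simpl. now destruct (interp x env). Qed.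

Lemma interp_EAdd a b env : interp (EAdd a b) env = (interp a env + interp b env)%nat.
Proof. simpl. induction (interp b env); simpl; lia. Qed.

Lemma interp_ESub a b env : interp (ESub a b) env = (interp a env - interp b env)%nat.
Proof.
  cbn [ESub interp]. induction (interp b env) as [|n IHn]; cbn [nat_rect]; [lia|].
  rewrite interp_EPred. cbn [interp nth]. rewrite IHn. lia.
Qed.

Lemma interp_EMul a b env : interp (EMul a b) env = (interp a env * interp b env)%nat.
Proof.
  cbn [EMul interp]. induction (interp b env) as [|n IHn]; cbn [nat_rect]; [lia|].
  rewrite interp_EAdd. cbn [interp nth]. rewrite interp_lift2_0, IHn. lia.
Qed.

Lemma interp_EIfz c a b env : interp (EIfz c a b) env =
  match interp c env with 0%nat => interp a env | S _ => interp b env end.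
Proof. simpl. destruct (interp c env); simpl; auto using interp_lift2_0. Qed.

Lemma interp_EIf c a b env : interp (EIf c a b) env =
  match interp c env with 0%nat => interp b env | S _ => interp a env end.
Proof. apply interp_EIfz. Qed.

Lemma interp_ELt a b env :
  interp (ELt a b) env = if Nat.ltb (interp a env) (interp b env) then 1%nat else 0%nat.
Proof.
  unfold ELt. rewrite interp_EIfz, interp_ESub. cbn [interp].
  destruct (Nat.ltb_spec (interp a env) (interp b env)).
  - now replace (S (interp a env) - interp b env)%nat with 0%nat by lia.
  - now replace (S (interp a env) - interp b env)%nat
      with (S (interp a env - interp b env)) by lia.
Qed.

Lemma interp_EEq a b env :
  interp (EEq a b) env = if Nat.eqb (interp a env) (interp b env) then 1%nat else 0%nat.
Proof.
  unfold EEq. rewrite !interp_EIfz, !interp_ESub.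
  destruct (Nat.eqb_spec (interp a env) (interp b env)) as [->|Hne].
  - now rewrite Nat.sub_diag.
  - destruct (Nat.lt_ge_cases (interp a env) (interp b env)).
    + replace (interp a env - interp b env)%nat with 0%nat by lia.
      now replace (interp b env - interp a env)%nat
        with (S (interp b env - interp a env - 1)) by lia.
    + now replace (interp a env - interp b env)%nat
        with (S (interp a env - interp b env - 1)) by lia.
Qed.

Lemma interp_ELet a body env :
  interp (ELet a body) env = interp body (interp a env :: 0%nat :: env).
Proof. reflexivity. Qed.

Global Opaque EOne EPred EAdd ESub EMul EIfz EIf ELt EEq ELet.

Ltac interp_simpl :=
  repeat (simpl; rewrite ?interp_EOne, ?interp_EPred, ?interp_EAdd, ?interp_ESub,
    ?interp_EMul, ?interp_EIfz, ?interp_EIf, ?interp_ELt, ?interp_EEq, ?interp_ELet,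
    ?interp_lift2_0).

Definition code_tl c := snd (Cantor.of_nat (pred c)).
Definition code_hd c := fst (Cantor.of_nat (pred c)).

Fixpoint code_drop (i c : nat) : nat :=
  match i with 0%nat => c | S i => code_tl (code_drop i c) end.

Definition ETl c := ESnd (EPred c).
Definition EHd c := EFst (EPred c).
Definition EDrop i c := EIter i c (ETl (EVar 0)).

Lemma interp_ETl c env : interp (ETl c) env = code_tl (interp c env).
Proof. unfold ETl. now interp_simpl. Qed.

Lemma interp_EHd c env : interp (EHd c) env = code_hd (interp c env).
Proof. unfold EHd. now interp_simpl. Qed.

Lemma interp_EDrop i c env : interp (EDrop i c) env = code_drop (interp i env) (interp c env).
Proof.
  cbn [EDrop interp]. induction (interp i env); cbn [nat_rect code_drop]; auto.
  rewrite interp_ETl. cbn [interp nth]. congruence.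
Qed.

Global Opaque ETl EHd EDrop.

Definition code_seg (p : baire) (i m : nat) : nat := code_list (map p (seq i m)).

Lemma code_prefix_seg p k : code_list (prefix p k) = code_seg p 0 k.
Proof.
  unfold code_seg. f_equal. induction k as [|k IHk]; [reflexivity|].
  cbn [prefix]. now rewrite IHk, seq_S, map_app.
Qed.

Lemma code_seg0 p i : code_seg p i 0 = 0%nat.
Proof. reflexivity. Qed.

Lemma code_seg_pos p i m : (0 < m)%nat -> exists v, code_seg p i m = S v.
Proof. destruct m; [lia|]. intros _. unfold code_seg; simpl. eauto. Qed.

Lemma code_tl_seg p i m : code_tl (code_seg p i m) = code_seg p (S i) (pred m).
Proof.
  destruct m; unfold code_seg, code_tl; simpl; [reflexivity|].
  now rewrite Cantor.cancel_of_to.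
Qed.

Lemma code_hd_seg p i m : (0 < m)%nat -> code_hd (code_seg p i m) = p i.
Proof.
  destruct m; [lia|]. intros _. unfold code_seg, code_hd; simpl.
  now rewrite Cantor.cancel_of_to.
Qed.

Lemma code_drop_seg p i m j : code_drop j (code_seg p i m) = code_seg p (i + j) (m - j).
Proof.
  induction j as [|j IHj]; simpl.
  - now rewrite Nat.add_0_r, Nat.sub_0_r.
  - rewrite IHj, code_tl_seg. f_equal; lia.
Qed.

Lemma code_list_ge_length l : (length l <= code_list l)%nat.
Proof.
  induction l as [|a l IHl]; simpl; auto.
  pose proof (Cantor.to_nat_non_decreasing a (code_list l)). lia.
Qed.

Lemma code_seg_ge p i m : (m <= code_seg p i m)%nat.
Proof.
  unfold code_seg. pose proof (code_list_ge_length (map p (seq i m))) as H.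
  now rewrite length_map, length_seq in H.
Qed.

Definition EHasLen c j :=
  EIfz (EDrop j c) (EIfz j EOne (EIf (EDrop (EPred j) c) EOne EZero)) EZero.

Lemma interp_EHasLen c j env p k : interp c env = code_seg p 0 k ->
  interp (EHasLen c j) env = if Nat.eqb k (interp j env) then 1%nat else 0%nat.
Proof.
  intros Hc. unfold EHasLen. interp_simpl.
  rewrite !interp_EDrop, Hc, !code_drop_seg. interp_simpl. simpl Nat.add.
  destruct (le_lt_dec k (interp j env)).
  - replace (k - interp j env)%nat with 0%nat by lia. rewrite code_seg0.
    destruct (interp j env) as [|j'] eqn:Ej; simpl.
    + destruct k; [reflexivity | lia].
    + destruct (Nat.eqb_spec k (S j')).
      * destruct (code_seg_pos p j' (k - j')) as [v ->]; [lia | reflexivity].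
      * now replace (k - j')%nat with 0%nat by lia.
  - destruct (code_seg_pos p (interp j env) (k - interp j env)) as [v ->]; [lia|].
    destruct (Nat.eqb_spec k (interp j env)); [lia | reflexivity].
Qed.

Global Opaque EHasLen.

(* Outputs [p n + 1] once the prefix has length [n + 1]. *)
Definition MSucc : expr :=
  EIf (EHasLen (EVar 0) (ESucc (EVar 1))) (ESucc (ESucc (EHd (EDrop (EVar 1) (EVar 0))))) EZero.

Lemma Phi_MSucc p : Phi (machine MSucc) p (fun n => S (p n)).
Proof.
  apply Phi_machine. intros n.
  assert (H : forall k, interp MSucc [code_list (prefix p k); n] =
     if Nat.eqb k (S n) then S (S (p n)) else 0%nat).
  { intros k. unfold MSucc. rewrite interp_EIf, code_prefix_seg.
    rewrite (interp_EHasLen _ _ _ p k) by reflexivity. cbn [interp nth].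
    destruct (Nat.eqb_spec k (S n)) as [->|]; auto.
    rewrite interp_EHd, interp_EDrop. cbn [interp nth].
    now rewrite code_drop_seg, code_hd_seg by lia. }
  split.
  - exists (S n). now rewrite H, Nat.eqb_refl.
  - intros k v Hv. rewrite H in Hv. destruct (Nat.eqb k (S n)); congruence.
Qed.

Fixpoint count_nz (p : baire) (N : nat) : nat :=
  match N with
  | 0%nat => 0%nat
  | S N => (count_nz p N + (if Nat.eqb (p N) 0 then 0 else 1))%nat
  end.

Definition ELen c :=
  EIter c EZero (EIfz (EDrop (EVar 1) (lift2 0 c)) (EVar 0) (ESucc (EVar 0))).

Definition ECountNZ c :=
  EIter c EZero (EIfz (EDrop (EVar 1) (lift2 0 c)) (EVar 0)
    (EIfz (EHd (EDrop (EVar 1) (lift2 0 c))) (EVar 0) (ESucc (EVar 0)))).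

(* Both loops run [c] times, which is at least the length [k] of the coded word. *)
Lemma interp_ELen c env p k : interp c env = code_seg p 0 k -> interp (ELen c) env = k.
Proof.
  intros Hc. cbn [ELen interp]. rewrite Hc.
  assert (Hloop : forall N, nat_rect (fun _ => nat) 0%nat (fun m h =>
      interp (EIfz (EDrop (EVar 1) (lift2 0 c)) (EVar 0) (ESucc (EVar 0))) (h :: m :: env)) N
      = Nat.min N k).
  { induction N as [|N IHN]; cbn [nat_rect]; auto.
    rewrite interp_EIfz, interp_EDrop. cbn [interp nth].
    rewrite interp_lift2_0, Hc, code_drop_seg, IHN. simpl Nat.add.
    destruct (le_lt_dec k N).
    - replace (k - N)%nat with 0%nat by lia. rewrite code_seg0. lia.
    - destruct (code_seg_pos p N (k - N)) as [v ->]; [lia | lia]. }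
  rewrite Hloop. pose proof (code_seg_ge p 0 k). lia.
Qed.

Lemma interp_ECountNZ c env p k :
  interp c env = code_seg p 0 k -> interp (ECountNZ c) env = count_nz p k.
Proof.
  intros Hc. cbn [ECountNZ interp]. rewrite Hc.
  assert (Hloop : forall N, nat_rect (fun _ => nat) 0%nat (fun m h =>
      interp (EIfz (EDrop (EVar 1) (lift2 0 c)) (EVar 0)
        (EIfz (EHd (EDrop (EVar 1) (lift2 0 c))) (EVar 0) (ESucc (EVar 0)))) (h :: m :: env)) N
      = count_nz p (Nat.min N k)).
  { induction N as [|N IHN]; cbn [nat_rect]; auto.
    rewrite interp_EIfz, interp_EDrop. cbn [interp nth].
    rewrite interp_lift2_0, Hc, code_drop_seg, IHN. simpl Nat.add.
    destruct (le_lt_dec k N).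
    - replace (k - N)%nat with 0%nat by lia. rewrite code_seg0. f_equal. lia.
    - destruct (code_seg_pos p N (k - N)) as [v ->]; [lia|].
      rewrite interp_EIfz, interp_EHd, interp_EDrop. cbn [interp nth].
      rewrite interp_lift2_0, Hc, code_drop_seg. simpl Nat.add.
      rewrite code_hd_seg by lia.
      replace (Nat.min (S N) k) with (S N) by lia. replace (Nat.min N k) with N by lia.
      cbn [count_nz]. destruct (p N); simpl; lia. }
  rewrite Hloop. pose proof (code_seg_ge p 0 k). f_equal. lia.
Qed.

Global Opaque ELen ECountNZ.

(* On a prefix of length [k + 1] ending in a nonzero symbol [v + 1], outputs [v] as the
   symbol whose index is the number of nonzero symbols seen so far, minus one. *)
Definition MMinus1 : expr :=
  ELet (ELen (EVar 0))
   (EIfz (EVar 0) EZero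
     (ELet (EHd (EDrop (EPred (EVar 0)) (EVar 2)))
       (EIfz (EVar 0) EZero
          (EIf (EEq (ECountNZ (EVar 4)) (ESucc (EVar 5))) (EVar 0) EZero)))).

Lemma interp_MMinus1 p k n : interp MMinus1 [code_seg p 0 k; n] =
  match k with
  | 0%nat => 0%nat
  | S k' => match p k' with
            | 0%nat => 0%nat
            | S v => if Nat.eqb (count_nz p k) (S n) then S v else 0%nat
            end
  end.
Proof.
  unfold MMinus1. rewrite interp_ELet, (interp_ELen _ _ p k) by reflexivity.
  rewrite interp_EIfz. cbn [interp nth]. destruct k as [|k]; auto.
  rewrite interp_ELet, interp_EHd, interp_EDrop, interp_EPred. cbn [interp nth pred].
  rewrite code_drop_seg, code_hd_seg by lia. simpl Nat.add.
  rewrite interp_EIfz. cbn [interp nth]. destruct (p k); auto.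
  rewrite interp_EIf, interp_EEq, (interp_ECountNZ _ _ p (S k)) by reflexivity.
  cbn [interp nth]. now destruct (Nat.eqb (count_nz p (S k)) (S n)).
Qed.

Global Opaque MMinus1.

Lemma count_nz_const p a b : (forall i, (a <= i < b)%nat -> p i = 0%nat) -> (a <= b)%nat ->
  count_nz p b = count_nz p a.
Proof.
  intros H Hab. induction b as [|b IHb]; [f_equal; lia|].
  destruct (Nat.eq_dec a (S b)) as [->|]; auto.
  cbn [count_nz]. rewrite IHb, (H b) by (intros; try apply H; lia). simpl. lia.
Qed.

Lemma strict_mono_lt_iff (s : nat -> nat) : (forall n, (s n < s (S n))%nat) ->
  forall m m', (s m < s m')%nat <-> (m < m')%nat.
Proof.
  intros H. assert (Hlt : forall m m', (m < m')%nat -> (s m < s m')%nat).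
  { intros m m' Hm. induction Hm as [|m' _ IH]; auto. specialize (H m'). lia. }
  intros m m'. split; auto. intros Hs.
  destruct (Nat.lt_ge_cases m m') as [|Hge]; auto.
  destruct (Nat.eq_dec m m') as [->|]; [lia|]. specialize (Hlt m' m ltac:(lia)). lia.
Qed.

Lemma count_nz_at_index p s : (forall n, (s n < s (S n))%nat) ->
  (forall i, p i <> 0%nat <-> exists n, s n = i) ->
  forall n, count_nz p (S (s n)) = S n.
Proof.
  intros Hs Hp. pose proof (strict_mono_lt_iff s Hs) as Hiff.
  assert (Hnz : forall n, Nat.eqb (p (s n)) 0 = false).
  { intros n. apply Nat.eqb_neq, Hp. eauto. }
  assert (Hgap : forall a b, (forall m, ~ (a <= s m < b)%nat) -> (a <= b)%nat ->
                 count_nz p b = count_nz p a).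
  { intros a b Hab. apply count_nz_const. intros i Hi.
    destruct (Nat.eq_dec (p i) 0) as [|Hpi]; auto. apply Hp in Hpi as [m <-].
    exfalso. apply (Hab m Hi). }
  induction n as [|n IHn]; cbn [count_nz]; rewrite Hnz.
  - rewrite (Hgap 0%nat (s 0%nat)); [reflexivity | | lia].
    intros m Hm. rewrite Hiff in Hm. lia.
  - rewrite (Hgap (S (s n)) (s (S n))), IHn; [lia | | apply Hs].
    intros m [Hm1 Hm2]. rewrite Hiff in Hm2. assert (Hm : (s n < s m)%nat) by lia.
    rewrite Hiff in Hm. lia.
Qed.

Lemma Phi_MMinus1 p q : minus1 p q -> Phi (machine MMinus1) p q.
Proof.
  intros [s [Hs [Hp Hq]]]. apply Phi_machine. intros n. setoid_rewrite code_prefix_seg.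
  split.
  - exists (S (s n)). rewrite interp_MMinus1, count_nz_at_index, Nat.eqb_refl, Hq by auto.
    destruct (p (s n)) eqn:E.
    + exfalso. refine (proj2 (Hp (s n)) _ E). eauto.
    + f_equal. lia.
  - intros k v Hv. rewrite interp_MMinus1 in Hv. destruct k as [|k]; [discriminate|].
    destruct (p k) eqn:E; [discriminate|].
    destruct (Nat.eqb_spec (count_nz p (S k)) (S n)) as [Hc|]; [|discriminate].
    injection Hv as <-.
    destruct (proj1 (Hp k) ltac:(congruence)) as [m <-].
    rewrite count_nz_at_index in Hc by auto. injection Hc as ->. rewrite Hq, E. lia.
Qed.

Open Scope R_scope.

(* Rational numbers coded as in [nuQ]: [<<c, d>, b>] stands for (c - d) / (b + 1). *)
Definition cq_pos r := fst (Cantor.of_nat (fst (Cantor.of_nat r))).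
Definition cq_neg r := snd (Cantor.of_nat (fst (Cantor.of_nat r))).
Definition cq_den r := S (snd (Cantor.of_nat r)).
Definition cq_val r : R := (INR (cq_pos r) - INR (cq_neg r)) / INR (cq_den r).
Definition cq_make (c d b : nat) : nat := Cantor.to_nat (Cantor.to_nat (c, d), pred b).

Lemma cq_pos_make c d b : cq_pos (cq_make c d b) = c.
Proof.
  unfold cq_pos, cq_make. rewrite Cantor.cancel_of_to; simpl. now rewrite Cantor.cancel_of_to.
Qed.

Lemma cq_neg_make c d b : cq_neg (cq_make c d b) = d.
Proof.
  unfold cq_neg, cq_make. rewrite Cantor.cancel_of_to; simpl. now rewrite Cantor.cancel_of_to.
Qed.

Lemma cq_den_make c d b : (0 < b)%nat -> cq_den (cq_make c d b) = b.
Proof. unfold cq_den, cq_make. rewrite !Cantor.cancel_of_to. simpl. lia. Qed.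

Lemma cq_den_pos r : 0 < INR (cq_den r).
Proof. apply lt_0_INR. unfold cq_den. lia. Qed.

Lemma nuQ_cq_val r : Q2R (nuQ r) = cq_val r.
Proof.
  unfold nuQ, cq_val, cq_pos, cq_neg, cq_den. destruct (Cantor.of_nat r) as [a b]. simpl.
  destruct (Cantor.of_nat a) as [c d]. unfold Q2R. simpl.
  rewrite minus_IZR, <- !INR_IZR_INZ, Zpos_P_of_succ_nat, <- Nat2Z.inj_succ, <- INR_IZR_INZ.
  reflexivity.
Qed.

Definition cq_add x y :=
  cq_make (cq_pos x * cq_den y + cq_pos y * cq_den x) (cq_neg x * cq_den y + cq_neg y * cq_den x)
    (cq_den x * cq_den y).
Definition cq_opp x := cq_make (cq_neg x) (cq_pos x) (cq_den x).
Definition cq_ltb x y :=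
  Nat.ltb (cq_pos x * cq_den y + cq_neg y * cq_den x) (cq_pos y * cq_den x + cq_neg x * cq_den y).

Lemma cq_val_add x y : cq_val (cq_add x y) = cq_val x + cq_val y.
Proof.
  unfold cq_add, cq_val. rewrite cq_pos_make, cq_neg_make, cq_den_make by (unfold cq_den; lia).
  pose proof (cq_den_pos x); pose proof (cq_den_pos y).
  rewrite !plus_INR, !mult_INR. field. lra.
Qed.

Lemma cq_val_opp x : cq_val (cq_opp x) = - cq_val x.
Proof.
  unfold cq_opp, cq_val. rewrite cq_pos_make, cq_neg_make, cq_den_make by (unfold cq_den; lia).
  pose proof (cq_den_pos x). field. lra.
Qed.

Lemma cq_ltb_spec x y : cq_ltb x y = true <-> cq_val x < cq_val y.
Proof.
  pose proof (cq_den_pos x); pose proof (cq_den_pos y).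
  set (lhs := (cq_pos x * cq_den y + cq_neg y * cq_den x)%nat).
  set (rhs := (cq_pos y * cq_den x + cq_neg x * cq_den y)%nat).
  set (dd := INR (cq_den x) * INR (cq_den y)).
  assert (Hdd : 0 < dd) by (apply Rmult_lt_0_compat; assumption).
  assert (Hcross : cq_val y - cq_val x = (INR rhs - INR lhs) / dd).
  { unfold cq_val, lhs, rhs, dd. rewrite !plus_INR, !mult_INR. field. lra. }
  unfold cq_ltb. fold lhs rhs. rewrite Nat.ltb_lt. split; intros Hlt.
  - apply lt_INR in Hlt. apply Rlt_0_minus. rewrite Hcross. apply Rdiv_lt_0_compat; lra.
  - apply INR_lt. apply Rlt_0_minus in Hlt. rewrite Hcross in Hlt. apply Rlt_0_minus.
    replace (INR rhs - INR lhs) with ((INR rhs - INR lhs) / dd * dd) by (field; lra).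
    now apply Rmult_lt_0_compat.
Qed.

Definition ECqPos r := EFst (EFst r).
Definition ECqNeg r := ESnd (EFst r).
Definition ECqDen r := ESucc (ESnd r).
Definition ECqMake c d b := EPair (EPair c d) (EPred b).

Definition ECqAdd x y :=
  ELet x (ELet (lift2 0 y)
    (ECqMake
      (EAdd (EMul (ECqPos (EVar 2)) (ECqDen (EVar 0))) (EMul (ECqPos (EVar 0)) (ECqDen (EVar 2))))
      (EAdd (EMul (ECqNeg (EVar 2)) (ECqDen (EVar 0))) (EMul (ECqNeg (EVar 0)) (ECqDen (EVar 2))))
      (EMul (ECqDen (EVar 2)) (ECqDen (EVar 0))))).

Definition ECqOpp x := ELet x (ECqMake (ECqNeg (EVar 0)) (ECqPos (EVar 0)) (ECqDen (EVar 0))).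

Definition ECqLt x y :=
  ELet x (ELet (lift2 0 y)
    (ELt
      (EAdd (EMul (ECqPos (EVar 2)) (ECqDen (EVar 0))) (EMul (ECqNeg (EVar 0)) (ECqDen (EVar 2))))
      (EAdd (EMul (ECqPos (EVar 0)) (ECqDen (EVar 2))) (EMul (ECqNeg (EVar 2)) (ECqDen (EVar 0)))))).

Lemma interp_ECqAdd x y env : interp (ECqAdd x y) env = cq_add (interp x env) (interp y env).
Proof. unfold ECqAdd, ECqMake, ECqPos, ECqNeg, ECqDen. now interp_simpl. Qed.

Lemma interp_ECqOpp x env : interp (ECqOpp x) env = cq_opp (interp x env).
Proof. unfold ECqOpp, ECqMake, ECqPos, ECqNeg, ECqDen. now interp_simpl. Qed.

Lemma interp_ECqLt x y env :
  interp (ECqLt x y) env = if cq_ltb (interp x env) (interp y env) then 1%nat else 0%nat.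
Proof. unfold ECqLt, ECqPos, ECqNeg, ECqDen. now interp_simpl. Qed.

Global Opaque ECqAdd ECqOpp ECqLt.

Definition ball_center b := fst (Cantor.of_nat b).
Definition ball_radius b := snd (Cantor.of_nat b).
Definition ball_right b := cq_add (ball_center b) (ball_radius b).

Definition ball_refl (fl : bool) b :=
  if fl then Cantor.to_nat (cq_opp (ball_center b), ball_radius b) else b.

Definition in_ballb x b : bool :=
  andb (cq_ltb (cq_add x (cq_opp (ball_center b))) (ball_radius b))
       (cq_ltb (cq_add (ball_center b) (cq_opp x)) (ball_radius b)).

Lemma in_ballb_spec x b :
  in_ballb x b = true <-> Rabs (cq_val x - cq_val (ball_center b)) < cq_val (ball_radius b).
Proof.
  unfold in_ballb. rewrite Bool.andb_true_iff, !cq_ltb_spec, !cq_val_add, !cq_val_opp.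
  unfold Rabs; destruct (Rcase_abs _); split; intros; lra.
Qed.

Lemma cq_val_ball_right b :
  cq_val (ball_right b) = cq_val (ball_center b) + cq_val (ball_radius b).
Proof. apply cq_val_add. Qed.

(* The sweep reads a list of balls [ent], where [0] means "no ball" and [S e] the ball [e]
   (mirrored if [fl]). A pass over the first [k] entries jumps from the current point to the
   right end of every ball containing it; [k] passes reach the least point [>= x0] outside
   all of them. *)
Definition sweep_step fl (ent : nat -> nat) m x :=
  match ent m with
  | 0%nat => x
  | S e => if in_ballb x (ball_refl fl e) then ball_right (ball_refl fl e) else x
  end.

Fixpoint sweep_pass fl ent k x :=
  match k with 0%nat => x | S m => sweep_step fl ent m (sweep_pass fl ent m x) end.

Definition sweep fl ent k x0 := Nat.iter k (sweep_pass fl ent k) x0.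

Lemma sweep_pass_ext fl e1 e2 k x : (forall m, (m < k)%nat -> e1 m = e2 m) ->
  sweep_pass fl e1 k x = sweep_pass fl e2 k x.
Proof.
  induction k as [|k IHk]; intros H; simpl; auto.
  rewrite IHk by (intros; apply H; lia). unfold sweep_step. now rewrite H by lia.
Qed.

Lemma sweep_ext fl e1 e2 k x : (forall m, (m < k)%nat -> e1 m = e2 m) ->
  sweep fl e1 k x = sweep fl e2 k x.
Proof.
  intros H. unfold sweep. generalize k at 1 3 as N. intros N.
  induction N as [|N IHN]; simpl; auto. rewrite IHN. now apply sweep_pass_ext.
Qed.

Definition bump (sh : bool) v := if sh then S v else v.
Definition entry sh c m := bump sh (code_hd (code_drop m c)).

Lemma entry_code_seg sh p k m : (m < k)%nat -> entry sh (code_seg p 0 k) m = bump sh (p m).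
Proof. intros H. unfold entry. now rewrite code_drop_seg, code_hd_seg by lia. Qed.

Definition EBump (sh : bool) e := if sh then ESucc e else e.
Definition EBallRefl (fl : bool) b := if fl then EPair (ECqOpp (EFst b)) (ESnd b) else b.

Definition EInBall x b :=
  ELet x (ELet (lift2 0 b)
    (EMul (ECqLt (ECqAdd (EVar 2) (ECqOpp (EFst (EVar 0)))) (ESnd (EVar 0)))
          (ECqLt (ECqAdd (EFst (EVar 0)) (ECqOpp (EVar 2))) (ESnd (EVar 0))))).

Definition EBallRight b := ELet b (ECqAdd (EFst (EVar 0)) (ESnd (EVar 0))).

Definition ESweepStep fl sh c m x :=
  ELet (EBump sh (EHd (EDrop m c)))
    (EIfz (EVar 0) (lift2 0 x)
      (ELet (EBallRefl fl (EPred (EVar 0)))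
        (EIf (EInBall (lift2 0 (lift2 0 x)) (EVar 0)) (EBallRight (EVar 0))
          (lift2 0 (lift2 0 x))))).

Definition ESweepPass fl sh c k x := EIter k x (ESweepStep fl sh (lift2 0 c) (EVar 1) (EVar 0)).

Definition ESweep fl sh c k x0 :=
  EIter k x0 (ESweepPass fl sh (lift2 0 c) (lift2 0 k) (EVar 0)).

Lemma interp_EBump sh e env : interp (EBump sh e) env = bump sh (interp e env).
Proof. now destruct sh. Qed.

Lemma interp_EBallRefl fl b env : interp (EBallRefl fl b) env = ball_refl fl (interp b env).
Proof. destruct fl; unfold EBallRefl, ball_refl; interp_simpl; now rewrite ?interp_ECqOpp. Qed.

Lemma interp_EInBall x b env :
  interp (EInBall x b) env = if in_ballb (interp x env) (interp b env) then 1%nat else 0%nat.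
Proof.
  unfold EInBall, in_ballb. interp_simpl.
  rewrite !interp_ECqLt, !interp_ECqAdd, !interp_ECqOpp. cbn [interp nth].
  unfold ball_center, ball_radius. now destruct (cq_ltb _ _), (cq_ltb _ _).
Qed.

Lemma interp_EBallRight b env : interp (EBallRight b) env = ball_right (interp b env).
Proof. unfold EBallRight. interp_simpl. now rewrite interp_ECqAdd. Qed.

Lemma interp_ESweepStep fl sh c m x env : interp (ESweepStep fl sh c m x) env =
  sweep_step fl (entry sh (interp c env)) (interp m env) (interp x env).
Proof.
  unfold ESweepStep, sweep_step, entry.
  rewrite interp_ELet, interp_EBump, interp_EHd, interp_EDrop, interp_EIfz. cbn [interp nth].
  destruct (bump sh (code_hd (code_drop (interp m env) (interp c env)))).
  - apply interp_lift2_0.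
  - rewrite interp_ELet, interp_EBallRefl, interp_EPred. cbn [interp nth pred].
    rewrite interp_EIf, interp_EInBall, !interp_lift2_0. cbn [interp nth].
    destruct (in_ballb _ _); [apply interp_EBallRight | reflexivity].
Qed.

Lemma interp_ESweepPass fl sh c k x env : interp (ESweepPass fl sh c k x) env =
  sweep_pass fl (entry sh (interp c env)) (interp k env) (interp x env).
Proof.
  cbn [ESweepPass interp]. induction (interp k env) as [|n IHn]; cbn [nat_rect sweep_pass]; auto.
  rewrite interp_ESweepStep. cbn [interp nth]. now rewrite interp_lift2_0, IHn.
Qed.

Lemma interp_ESweep fl sh c k x0 env : interp (ESweep fl sh c k x0) env =
  sweep fl (entry sh (interp c env)) (interp k env) (interp x0 env).
Proof.
  cbn [ESweep interp]. unfold sweep. generalize (interp k env) at 1 2 as N. intros N.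
  induction N as [|N IHN]; cbn [nat_rect Nat.iter]; auto.
  rewrite interp_ESweepPass. cbn [interp nth]. rewrite !interp_lift2_0. now f_equal.
Qed.

Global Opaque EBump EBallRefl EInBall EBallRight ESweepStep ESweepPass ESweep.

Fixpoint count_true (f : nat -> bool) (n : nat) : nat :=
  match n with 0%nat => 0%nat | S n => (count_true f n + if f n then 1 else 0)%nat end.

Lemma count_true_le f g n : (forall i, (i < n)%nat -> f i = true -> g i = true) ->
  (count_true f n <= count_true g n)%nat.
Proof.
  induction n as [|n IHn]; simpl; intros H; auto.
  assert (IH : (count_true f n <= count_true g n)%nat) by (apply IHn; auto).
  assert (Hn : f n = true -> g n = true) by (apply H; lia).
  destruct (f n), (g n); lia.
Qed.

Lemma count_true_lt f g n j : (forall i, (i < n)%nat -> f i = true -> g i = true) ->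
  (j < n)%nat -> f j = false -> g j = true -> (count_true f n < count_true g n)%nat.
Proof.
  induction n as [|n IHn]; simpl; intros H Hj Hf Hg; [lia|].
  assert (Hn : f n = true -> g n = true) by (apply H; lia).
  destruct (Nat.eq_dec j n) as [->|].
  - rewrite Hf, Hg. pose proof (count_true_le f g n ltac:(auto)). lia.
  - assert (IH : (count_true f n < count_true g n)%nat) by (apply IHn; auto; lia).
    destruct (f n), (g n); lia.
Qed.

Lemma count_true_le_n f n : (count_true f n <= n)%nat.
Proof. induction n; simpl; auto. destruct (f n); lia. Qed.

Lemma count_true_eq0 f n j : count_true f n = 0%nat -> (j < n)%nat -> f j = false.
Proof.
  induction n as [|n IHn]; simpl; intros H Hj; [lia|].
  destruct (Nat.eq_dec j n) as [->|]; [destruct (f n); auto; lia | apply IHn; lia].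
Qed.

Section Sweep.

Variable ent : nat -> nat.
Variable k : nat.
Variable fl : bool.

Definition ball_at i := ball_refl fl (pred (ent i)).

Definition in_ball i y := (i < k)%nat /\ ent i <> 0%nat /\
  Rabs (y - cq_val (ball_center (ball_at i))) < cq_val (ball_radius (ball_at i)).

Definition covered s y := forall z, s <= z < y -> exists i, in_ball i z.

(* A ball is alive at [y] while its right end lies beyond [y]; every pass that moves the
   point kills at least one alive ball, which bounds the number of useful passes by [k]. *)
Definition alive i y : bool :=
  andb (negb (Nat.eqb (ent i) 0))
       (if Rlt_dec y (cq_val (ball_right (ball_at i))) then true else false).

Definition alive_count y := count_true (fun i => alive i y) k.

Lemma alive_antimono y y' i : y <= y' -> alive i y' = true -> alive i y = true.
Proof.
  unfold alive. intros Hy H. apply Bool.andb_true_iff in H as [-> H].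
  destruct (Rlt_dec y' _); [|discriminate]. destruct (Rlt_dec y _); auto. lra.
Qed.

Lemma in_ball_alive i y : in_ball i y -> alive i y = true.
Proof.
  unfold in_ball, alive. intros [Hi [Hp Hb]]. destruct (Nat.eqb_spec (ent i) 0); [lia|]. simpl.
  rewrite cq_val_ball_right. destruct (Rlt_dec _ _); auto.
  unfold Rabs in Hb. destruct (Rcase_abs _); lra.
Qed.

Lemma sweep_step_cases m x : (m < k)%nat ->
  (in_ball m (cq_val x) /\ sweep_step fl ent m x = ball_right (ball_at m)) \/
  (~ in_ball m (cq_val x) /\ sweep_step fl ent m x = x).
Proof.
  intros Hm. unfold sweep_step, in_ball, ball_at. destruct (ent m) as [|e].
  - right. split; auto. intros [_ [H _]]; auto.
  - simpl. destruct (in_ballb x (ball_refl fl e)) eqn:Eb.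
    + left. apply in_ballb_spec in Eb. repeat split; auto; lia.
    + right. split; auto. intros [_ [_ Hb]]. apply in_ballb_spec in Hb. congruence.
Qed.

Lemma sweep_pass_inv x s m : covered s (cq_val x) -> (m <= k)%nat ->
  let h := sweep_pass fl ent m x in
  cq_val x <= cq_val h /\ covered s (cq_val h) /\
  ((h = x /\ forall i, (i < m)%nat -> ~ in_ball i (cq_val x)) \/
   ((exists i, in_ball i (cq_val x)) /\ (alive_count (cq_val h) < alive_count (cq_val x))%nat)).
Proof.
  intros Hcov. induction m as [|m IHm]; intros Hm h; subst h; simpl.
  { split; [lra|]. split; auto. left. split; auto. intros; lia. }
  destruct (IHm ltac:(lia)) as [I1 [I2 I3]]. set (h := sweep_pass fl ent m x) in *.
  destruct (sweep_step_cases m h ltac:(lia)) as [[Hin ->]|[Hin ->]].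
  2:{ split; auto. split; auto. destruct I3 as [[Ehx Hno]|]; [left|right]; auto.
      split; auto. intros i Hi.
      destruct (Nat.eq_dec i m) as [->|]; [now rewrite <- Ehx | apply Hno; lia]. }
  assert (Hjump : cq_val h < cq_val (ball_right (ball_at m))).
  { rewrite cq_val_ball_right. destruct Hin as [_ [_ Hb]].
    unfold Rabs in Hb; destruct (Rcase_abs _); lra. }
  split; [lra|]. split.
  - intros z Hz. destruct (Rlt_dec z (cq_val h)); [apply I2; lra|].
    exists m. destruct Hin as [Hm1 [Hm2 Hb]]. repeat split; auto.
    rewrite cq_val_ball_right in Hz.
    unfold Rabs in *. destruct (Rcase_abs (cq_val h - _)), (Rcase_abs (z - _)); lra.
  - right.
    assert (Hlt : (alive_count (cq_val (ball_right (ball_at m))) < alive_count (cq_val h))%nat).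
    { apply (count_true_lt _ _ k m); try lia.
      - intros i _. apply alive_antimono. lra.
      - unfold alive. destruct (Rlt_dec _ _); [lra | apply Bool.andb_false_r].
      - now apply in_ball_alive. }
    destruct I3 as [[Ehx _]|[Hex Hlt2]].
    + rewrite Ehx in Hin, Hlt. split; eauto.
    + split; auto. lia.
Qed.

Lemma sweep_pass_spec x s : covered s (cq_val x) ->
  let h := sweep_pass fl ent k x in
  cq_val x <= cq_val h /\ covered s (cq_val h) /\
  ((h = x /\ forall i, ~ in_ball i (cq_val x)) \/
   ((exists i, in_ball i (cq_val x)) /\ (alive_count (cq_val h) < alive_count (cq_val x))%nat)).
Proof.
  intros H. destruct (sweep_pass_inv x s k H (le_n _)) as [A1 [A2 A3]].
  split; auto. split; auto. destruct A3 as [[B1 B2]|B]; [left|right]; auto.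
  split; auto. intros i Hi. apply (B2 i); auto. apply Hi.
Qed.

Lemma sweep_spec x0 :
  let X := sweep fl ent k x0 in
  cq_val x0 <= cq_val X /\ covered (cq_val x0) (cq_val X) /\ forall i, ~ in_ball i (cq_val X).
Proof.
  assert (Hiter : forall N, let h := Nat.iter N (sweep_pass fl ent k) x0 in
     cq_val x0 <= cq_val h /\ covered (cq_val x0) (cq_val h) /\
     ((forall i, ~ in_ball i (cq_val h)) \/ (alive_count (cq_val h) + N <= k)%nat)).
  { induction N as [|N [I1 [I2 I3]]]; intros h; subst h; simpl.
    - split; [lra|]. split; [intros z Hz; lra|]. right.
      pose proof (count_true_le_n (fun i => alive i (cq_val x0)) k). unfold alive_count. lia.
    - set (h := Nat.iter N (sweep_pass fl ent k) x0) in *.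
      destruct (sweep_pass_spec h (cq_val x0) I2) as [P1 [P2 [[-> Q2]|[[i Hi] Q2]]]].
      + split; [lra|]. auto.
      + split; [lra|]. split; auto. destruct I3 as [I3|I3]; [now apply I3 in Hi | right; lia]. }
  unfold sweep. cbv zeta. destruct (Hiter k) as [A1 [A2 [A3|A3]]]; repeat split; auto.
  intros i Hi. assert (Hk : (i < k)%nat) by apply Hi.
  assert (HZ : alive_count (cq_val (Nat.iter k (sweep_pass fl ent k) x0)) = 0%nat) by lia.
  pose proof (count_true_eq0 _ _ i HZ Hk) as Hdead. cbv beta in Hdead.
  now rewrite in_ball_alive in Hdead.
Qed.

End Sweep.

Definition cq_one : nat := Cantor.to_nat (Cantor.to_nat (1%nat, 0%nat), 0%nat).
Definition cq_minus_one : nat := Cantor.to_nat (Cantor.to_nat (0%nat, 1%nat), 0%nat).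

Definition ECqOne := EPair (EPair EOne EZero) EZero.
Definition ECqMinusOne := EPair (EPair EZero EOne) EZero.

Lemma interp_ECqOne env : interp ECqOne env = cq_one.
Proof. reflexivity. Qed.

Lemma interp_ECqMinusOne env : interp ECqMinusOne env = cq_minus_one.
Proof. reflexivity. Qed.

Global Opaque ECqOne ECqMinusOne.

(* Symbol [<j, 0>] is the ball (X - 2, X) and [<j, 1>] the ball (M, M + 2), where X and M are
   the least and the greatest point of [0, 1] outside the first [j] balls of [p]
   (M = -Z, by sweeping the mirrored balls from -1); if X > 1, or for other sides, it is the
   code [0], an empty ball. Read as a completion name ([sh = false]), zeros of [p] are
   skipped. *)
Definition hull_name (sh : bool) (p : baire) (n : nat) : nat :=
  let j := fst (Cantor.of_nat n) in
  let side := snd (Cantor.of_nat n) in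
  let ent := fun m => bump sh (p m) in
  let X := sweep false ent j 0%nat in
  let Z := sweep true ent j cq_minus_one in
  if cq_ltb cq_one X then 0%nat else
  match side with
  | 0%nat => Cantor.to_nat (cq_add X cq_minus_one, cq_one)
  | 1%nat => Cantor.to_nat (cq_add cq_one (cq_opp Z), cq_one)
  | _ => 0%nat
  end.

(* Outputs symbol [<j, side>] once the prefix has length [j]; [os] adds 1 to the output. *)
Definition MHull (sh os : bool) : expr :=
  ELet (EFst (EVar 1))
   (EIf (EHasLen (EVar 2) (EVar 0))
     (ELet (ESweep false sh (EVar 2) (EVar 0) EZero)
       (ELet (ESweep true sh (EVar 4) (EVar 2) ECqMinusOne)
          (EBump os (EIf (ECqLt ECqOne (EVar 2)) EOne
             (EIfz (ESnd (EVar 7)) (ESucc (EPair (ECqAdd (EVar 2) ECqMinusOne) ECqOne))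
                (EIfz (EPred (ESnd (EVar 7)))
                   (ESucc (EPair (ECqAdd ECqOne (ECqOpp (EVar 0))) ECqOne)) EOne))))))
     EZero).

Lemma interp_MHull sh os p k n : interp (MHull sh os) [code_seg p 0 k; n] =
  if Nat.eqb k (fst (Cantor.of_nat n)) then S (bump os (hull_name sh p n)) else 0%nat.
Proof.
  unfold MHull. rewrite interp_ELet, interp_EIf. cbn [interp nth].
  rewrite (interp_EHasLen _ _ _ p k) by reflexivity. cbn [interp nth].
  destruct (Nat.eqb_spec k (fst (Cantor.of_nat n))) as [Ek|]; [|reflexivity].
  rewrite <- Ek, !interp_ELet, !interp_ESweep. cbn [interp nth].
  rewrite interp_EBump, interp_EIf, interp_ECqLt. cbn [interp nth].
  rewrite !interp_ECqOne, !interp_ECqMinusOne.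
  assert (Hent : forall m, (m < k)%nat -> entry sh (code_seg p 0 k) m = bump sh (p m))
    by (intros; now apply entry_code_seg).
  rewrite (sweep_ext false _ _ _ _ Hent), (sweep_ext true _ _ _ _ Hent).
  unfold hull_name. rewrite <- Ek.
  destruct (cq_ltb cq_one _); [now destruct os|].
  repeat progress (cbn [interp nth pred]; rewrite ?interp_EIfz, ?interp_EPred, ?interp_ECqAdd,
    ?interp_ECqOpp, ?interp_ECqOne, ?interp_ECqMinusOne, ?interp_EOne).
  destruct (snd (Cantor.of_nat n)) as [|[|side]]; now destruct os.
Qed.

Lemma Phi_MHull sh os p : Phi (machine (MHull sh os)) p (fun n => bump os (hull_name sh p n)).
Proof.
  apply Phi_machine. intros n. setoid_rewrite code_prefix_seg. split.
  - exists (fst (Cantor.of_nat n)). now rewrite interp_MHull, Nat.eqb_refl.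
  - intros k v Hv. rewrite interp_MHull in Hv. destruct (Nat.eqb _ _); congruence.
Qed.

Lemma lub_approx (E : R -> Prop) m w : is_lub E m -> w < m -> exists t, E t /\ w < t.
Proof.
  intros [_ Hl] Hw. apply Classical_Prop.NNPP. intros H.
  enough (m <= w) by lra. apply Hl. intros t Et.
  destruct (Rle_lt_dec t w); auto. exfalso; eauto.
Qed.

Section Convex.

Variable B : R -> Prop.
Hypothesis B_convex : forall u v w, B u -> B w -> u <= v <= w -> B v.

(* With s the supremum of the t such that [u, t] lies in U, the point s belongs to B and
   cannot be in U (U would reach beyond s) nor in V (points of B just below s are in U). *)
Lemma convex_not_separated (U V : R -> Prop) u v : open_set U -> open_set V ->
  (forall x, B x -> U x \/ V x) -> B u -> U u -> B v -> V v -> u < v ->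
  (forall x, ~ (B x /\ U x /\ V x)) -> False.
Proof.
  intros HU HV Hcov Bu Uu Bv Vv Huv Hdis.
  set (Reach := fun t => u <= t <= v /\ forall w, u <= w <= t -> U w).
  assert (Reach_u : Reach u) by (split; [lra|]; intros w Hw; now replace w with u by lra).
  assert (HS : bound Reach) by (exists v; intros t [Ht _]; lra).
  destruct (completeness Reach HS (ex_intro _ u Reach_u)) as [s Hs].
  assert (Hus : u <= s) by now apply Hs.
  assert (Hsv : s <= v) by (apply Hs; intros t [Ht _]; lra).
  assert (Bs : B s) by (apply (B_convex u s v); auto).
  assert (Hbelow : forall w, u <= w < s -> U w).
  { intros w Hw. destruct (lub_approx Reach s w Hs (proj2 Hw)) as [t [[_ Ht] Hwt]]. apply Ht; lra. }
  destruct (Hcov s Bs) as [Us|Vs].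
  - assert (s <> v) by (intros ->; apply (Hdis v); auto).
    destruct (HU s Us) as [d Hd]. pose proof (cond_pos d).
    set (t := Rmin (s + d / 2) v).
    assert (Reach_t : Reach t).
    { split; [unfold t, Rmin; destruct (Rle_dec _ _); lra|].
      intros w Hw. destruct (Rlt_dec w s); [apply Hbelow; lra|].
      apply Hd. unfold disc, t, Rmin in *. destruct (Rle_dec _ _); rewrite Rabs_right; lra. }
    pose proof (proj1 Hs t Reach_t). unfold t, Rmin in *; destruct (Rle_dec _ _); lra.
  - assert (u <> s) by (intros <-; apply (Hdis u); auto).
    destruct (HV s Vs) as [d Hd]. pose proof (cond_pos d).
    set (w := Rmax u (s - d / 2)).
    assert (Hw : u <= w < s) by (unfold w, Rmax; destruct (Rle_dec _ _); lra).
    apply (Hdis w). split; [apply (B_convex u w v); auto; lra|]. split; [now apply Hbelow|].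
    apply Hd. unfold disc. unfold w, Rmax in *; destruct (Rle_dec _ _); rewrite Rabs_left; lra.
Qed.

Lemma convex_connected : connected B.
Proof.
  intros [U [V [HU [HV [Hcov [[u [Bu Uu]] [[v [Bv Vv]] Hdis]]]]]]].
  destruct (Rtotal_order u v) as [H|[->|H]].
  - exact (convex_not_separated U V u v HU HV Hcov Bu Uu Bv Vv H Hdis).
  - apply (Hdis v); auto.
  - apply (convex_not_separated V U v u HV HU); auto.
    + intros x Bx. destruct (Hcov x Bx); auto.
    + intros x [Bx [Vx Ux]]. apply (Hdis x); auto.
Qed.

End Convex.

(* The supremum of the finitely covered initial segments of [a, b] is [b]. *)
Lemma segment_finite_subcover (a b : R) (W : nat -> R -> Prop) :
  (forall n x, W n x -> exists d, 0 < d /\ forall z, Rabs (z - x) < d -> W n z) ->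
  (forall x, a <= x <= b -> exists n, W n x) ->
  exists N, forall x, a <= x <= b -> exists n, (n < N)%nat /\ W n x.
Proof.
  intros Hop Hcov. destruct (Rle_lt_dec a b) as [Hab|]; [|exists 0%nat; intros; lra].
  set (covered_upto t N := forall x, a <= x <= t -> exists n, (n < N)%nat /\ W n x).
  set (Good := fun t => a <= t <= b /\ exists N, covered_upto t N).
  assert (HS : bound Good) by (exists b; intros t [Ht _]; lra).
  assert (Good_a : Good a).
  { split; [lra|]. destruct (Hcov a) as [n0 Hn0]; [lra|].
    exists (S n0). intros x Hx. replace x with a by lra. eauto. }
  destruct (completeness Good HS (ex_intro _ a Good_a)) as [s Hs].
  assert (Has : a <= s) by now apply Hs.
  assert (Hsb : s <= b) by (apply Hs; intros t [Ht _]; lra).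
  destruct (Hcov s) as [m Hm]; [lra|]. destruct (Hop m s Hm) as [d [Hd Hdd]].
  assert (Hnear : exists t N, a <= t /\ s - d < t /\ covered_upto t N).
  { destruct (Rlt_dec a (s - d / 2)).
    - destruct (lub_approx Good s (s - d / 2) Hs ltac:(lra)) as [t [[Ht [N HN]] Hst]].
      exists t, N. repeat split; auto; lra.
    - destruct Good_a as [_ [N HN]]. exists a, N. repeat split; auto; lra. }
  destruct Hnear as [t [N [Hat [Hdt HN]]]].
  set (t' := Rmin (s + d / 2) b).
  assert (Good_t' : Good t').
  { split; [unfold t', Rmin; destruct (Rle_dec _ _); lra|].
    exists (Nat.max N (S m)). intros x Hx. destruct (Rle_dec x t).
    - destruct (HN x) as [n [Hn Wn]]; [lra|]. exists n; split; auto. lia.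
    - exists m. split; [lia|]. apply Hdd.
      unfold t', Rmin in Hx; destruct (Rle_dec _ _); unfold Rabs; destruct (Rcase_abs _); lra. }
  destruct (Rlt_dec s b).
  - pose proof (proj1 Hs t' Good_t'). unfold t', Rmin in *; destruct (Rle_dec _ _); lra.
  - assert (Ht' : t' = b) by (unfold t', Rmin; destruct (Rle_dec _ _); lra).
    destruct Good_t' as [_ [N' HN']]. rewrite Ht' in HN'. eauto.
Qed.

Lemma open_set_lt y : open_set (fun x => x < y).
Proof.
  intros x Hx. exists (mkposreal (y - x) ltac:(lra)). intros z Hz.
  unfold disc in Hz. simpl in Hz. unfold Rabs in Hz; destruct (Rcase_abs _); lra.
Qed.

Lemma open_set_gt y : open_set (fun x => y < x).
Proof.
  intros x Hx. exists (mkposreal (x - y) ltac:(lra)). intros z Hz.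
  unfold disc in Hz. simpl in Hz. unfold Rabs in Hz; destruct (Rcase_abs _); lra.
Qed.

Lemma connected_one_side (A : R -> Prop) y : connected A -> ~ A y ->
  (forall a, A a -> y < a) \/ (forall a, A a -> a < y).
Proof.
  intros Hc Hy.
  assert (Hneq : forall a, A a -> a < y \/ y < a).
  { intros a Aa. destruct (Rtotal_order a y) as [|[->|]]; tauto. }
  destruct (Classical_Prop.classic (exists a, A a /\ a < y)) as [[a1 [A1 H1]]|Hno1];
  destruct (Classical_Prop.classic (exists a, A a /\ y < a)) as [[a2 [A2 H2]]|Hno2].
  - exfalso. apply Hc. exists (fun x => x < y), (fun x => y < x).
    repeat split; eauto using open_set_lt, open_set_gt. intros x [_ [? ?]]; lra.
  - right. intros a Aa. destruct (Hneq a Aa); eauto. exfalso; eauto.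
  - left. intros a Aa. destruct (Hneq a Aa); eauto. exfalso; eauto.
  - left. intros a Aa. destruct (Hneq a Aa); exfalso; eauto.
Qed.

Lemma ball_cq_val b y :
  ball b y <-> Rabs (y - cq_val (ball_center b)) < cq_val (ball_radius b).
Proof.
  unfold ball, ball_center, ball_radius. destruct (Cantor.of_nat b) as [a r].
  now rewrite !nuQ_cq_val.
Qed.

Lemma ball_center_pair a b : ball_center (Cantor.to_nat (a, b)) = a.
Proof. unfold ball_center. now rewrite Cantor.cancel_of_to. Qed.

Lemma ball_radius_pair a b : ball_radius (Cantor.to_nat (a, b)) = b.
Proof. unfold ball_radius. now rewrite Cantor.cancel_of_to. Qed.

Lemma ball_cq_pair a r y : ball (Cantor.to_nat (a, r)) y <-> Rabs (y - cq_val a) < cq_val r.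
Proof. now rewrite ball_cq_val, ball_center_pair, ball_radius_pair. Qed.

Lemma cq_val_0 : cq_val 0%nat = 0.
Proof.
  unfold cq_val, cq_pos, cq_neg, cq_den. rewrite of_nat0; simpl. rewrite of_nat0; simpl. lra.
Qed.

Lemma cq_val_one : cq_val cq_one = 1.
Proof.
  unfold cq_val, cq_pos, cq_neg, cq_den, cq_one.
  rewrite Cantor.cancel_of_to; simpl. rewrite Cantor.cancel_of_to; simpl. lra.
Qed.

Lemma cq_val_minus_one : cq_val cq_minus_one = -1.
Proof.
  unfold cq_val, cq_pos, cq_neg, cq_den, cq_minus_one.
  rewrite Cantor.cancel_of_to; simpl. rewrite Cantor.cancel_of_to; simpl. lra.
Qed.

Lemma ball_0_empty y : ~ ball 0%nat y.
Proof.
  rewrite ball_cq_val. unfold ball_center, ball_radius. rewrite of_nat0. simpl.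
  rewrite cq_val_0. pose proof (Rabs_pos (y - 0)). lra.
Qed.

Lemma ball_open b x : ball b x -> exists d, 0 < d /\ forall z, Rabs (z - x) < d -> ball b z.
Proof.
  rewrite ball_cq_val. intros H.
  exists (cq_val (ball_radius b) - Rabs (x - cq_val (ball_center b))).
  split; [lra|]. intros z Hz. rewrite ball_cq_val.
  pose proof (Rabs_triang (z - x) (x - cq_val (ball_center b))) as Htri.
  replace (z - x + (x - cq_val (ball_center b))) with (z - cq_val (ball_center b)) in Htri by ring.
  lra.
Qed.

Section Hull.

Variable sh : bool.
Variable p : baire.

Definition hull_entry m := bump sh (p m).
Definition hull_lo j := cq_val (sweep false hull_entry j 0%nat).
Definition hull_hi j := - cq_val (sweep true hull_entry j cq_minus_one).

Definition uncovered j y := 0 <= y <= 1 /\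
  forall i, (i < j)%nat -> hull_entry i <> 0%nat -> ~ ball (pred (hull_entry i)) y.

Definition hull y := 0 <= y <= 1 /\ forall n, ~ ball (hull_name sh p n) y.

Lemma in_ball_unrefl j i y : in_ball hull_entry j false i y <->
  (i < j)%nat /\ hull_entry i <> 0%nat /\ ball (pred (hull_entry i)) y.
Proof. unfold in_ball, ball_at, ball_refl. now rewrite ball_cq_val. Qed.

Lemma in_ball_refl j i y : in_ball hull_entry j true i y <->
  (i < j)%nat /\ hull_entry i <> 0%nat /\ ball (pred (hull_entry i)) (-y).
Proof.
  unfold in_ball, ball_at, ball_refl. cbv iota.
  rewrite ball_cq_val, ball_center_pair, ball_radius_pair, cq_val_opp, <- Rabs_Ropp.
  now replace (- (y - - cq_val (ball_center (pred (hull_entry i)))))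
    with (- y - cq_val (ball_center (pred (hull_entry i)))) by ring.
Qed.

Lemma hull_lo_spec j : 0 <= hull_lo j /\
  (forall y, 0 <= y < hull_lo j -> ~ uncovered j y) /\
  (forall i, (i < j)%nat -> hull_entry i <> 0%nat -> ~ ball (pred (hull_entry i)) (hull_lo j)).
Proof.
  destruct (sweep_spec hull_entry j false 0%nat) as [A1 [A2 A3]].
  rewrite cq_val_0 in A1, A2. unfold hull_lo. split; auto. split.
  - intros y Hy [_ Hc]. destruct (A2 y Hy) as [i Hi].
    apply in_ball_unrefl in Hi as [Hi1 [Hi2 Hi3]]. now apply (Hc i).
  - intros i Hi He Hb. apply (A3 i). now apply in_ball_unrefl.
Qed.

Lemma hull_hi_spec j : hull_hi j <= 1 /\
  (forall y, hull_hi j < y <= 1 -> ~ uncovered j y) /\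
  (forall i, (i < j)%nat -> hull_entry i <> 0%nat -> ~ ball (pred (hull_entry i)) (hull_hi j)).
Proof.
  destruct (sweep_spec hull_entry j true cq_minus_one) as [A1 [A2 A3]].
  rewrite cq_val_minus_one in A1, A2. unfold hull_hi. split; [lra|]. split.
  - intros y Hy [_ Hc]. destruct (A2 (-y)) as [i Hi]; [lra|].
    apply in_ball_refl in Hi as [Hi1 [Hi2 Hi3]]. rewrite Ropp_involutive in Hi3.
    now apply (Hc i).
  - intros i Hi He Hb. apply (A3 i). now apply in_ball_refl.
Qed.

Lemma hull_lo_min j y : uncovered j y -> hull_lo j <= y.
Proof.
  intros H. destruct (hull_lo_spec j) as [_ [Hlo _]].
  destruct (Rle_lt_dec (hull_lo j) y); auto. exfalso. apply (Hlo y); auto. destruct H; lra.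
Qed.

Lemma hull_hi_max j y : uncovered j y -> y <= hull_hi j.
Proof.
  intros H. destruct (hull_hi_spec j) as [_ [Hhi _]].
  destruct (Rle_lt_dec y (hull_hi j)); auto. exfalso. apply (Hhi y); auto. destruct H; lra.
Qed.

Lemma hull_lo_uncovered j : hull_lo j <= 1 -> uncovered j (hull_lo j).
Proof. intros H. destruct (hull_lo_spec j) as [Hlo [_ Hb]]. split; [lra | auto]. Qed.

Lemma hull_hi_uncovered j : hull_lo j <= 1 -> uncovered j (hull_hi j).
Proof.
  intros H. pose proof (hull_hi_max j _ (hull_lo_uncovered j H)) as Hlohi.
  destruct (hull_lo_spec j) as [Hlo _], (hull_hi_spec j) as [Hhi [_ Hb]]. split; [lra | auto].
Qed.

Lemma uncovered_antimono j j' y : (j <= j')%nat -> uncovered j' y -> uncovered j y.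
Proof. intros H [H1 H2]. split; auto. intros i Hi. apply H2. lia. Qed.

Lemma uncovered_hull_lo_le1 j y : uncovered j y -> hull_lo j <= 1.
Proof. intros H. pose proof (hull_lo_min j y H). destruct H; lra. Qed.

Lemma hull_lo_le_hi j j' : hull_lo j <= 1 -> hull_lo j' <= 1 -> hull_lo j <= hull_hi j'.
Proof.
  intros H H'. destruct (Nat.le_ge_cases j j') as [Hjj|Hjj].
  - pose proof (hull_lo_min j _ (uncovered_antimono j j' _ Hjj (hull_lo_uncovered j' H'))).
    pose proof (hull_hi_max j' _ (hull_lo_uncovered j' H')). lra.
  - pose proof (hull_hi_max j _ (hull_lo_uncovered j H)).
    pose proof (hull_hi_max j' _ (uncovered_antimono j' j _ Hjj (hull_hi_uncovered j H))). lra.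
Qed.

Lemma hull_lo_0 : hull_lo 0%nat = 0.
Proof. apply cq_val_0. Qed.

Lemma hull_name_ball j side y : 0 <= y <= 1 ->
  ball (hull_name sh p (Cantor.to_nat (j, side))) y <->
  hull_lo j <= 1 /\ ((side = 0%nat /\ y < hull_lo j) \/ (side = 1%nat /\ hull_hi j < y)).
Proof.
  intros Hy. unfold hull_name. rewrite Cantor.cancel_of_to. simpl. fold hull_entry.
  destruct (cq_ltb cq_one (sweep false hull_entry j 0)) eqn:Eq.
  { apply cq_ltb_spec in Eq. rewrite cq_val_one in Eq. fold (hull_lo j) in Eq.
    split; [intros H; now apply ball_0_empty in H | lra]. }
  assert (Hle : hull_lo j <= 1).
  { destruct (Rle_lt_dec (hull_lo j) 1) as [|Hgt]; auto.
    rewrite <- cq_val_one in Hgt. apply cq_ltb_spec in Hgt. congruence. }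
  pose proof (hull_lo_spec j) as [Hlo0 _]. pose proof (hull_lo_le_hi j j Hle Hle).
  destruct side as [|[|side]].
  - rewrite ball_cq_pair, cq_val_add, cq_val_minus_one, cq_val_one. fold (hull_lo j).
    split.
    + intros Hb. split; auto. left. split; auto. unfold Rabs in Hb; destruct (Rcase_abs _); lra.
    + intros [_ [[_ Hb]|[Hb _]]]; [|discriminate]. unfold Rabs; destruct (Rcase_abs _); lra.
  - rewrite ball_cq_pair, cq_val_add, cq_val_opp, cq_val_one.
    change (- cq_val (sweep true hull_entry j cq_minus_one)) with (hull_hi j). split.
    + intros Hb. split; auto. right. split; auto. unfold Rabs in Hb; destruct (Rcase_abs _); lra.
    + intros [_ [[Hb _]|[_ Hb]]]; [discriminate|]. unfold Rabs; destruct (Rcase_abs _); lra.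
  - split; [intros Hb; now apply ball_0_empty in Hb | intros [_ [[? _]|[? _]]]; discriminate].
Qed.

Lemma hull_spec y : hull y <-> 0 <= y <= 1 /\
  forall j, hull_lo j <= 1 -> hull_lo j <= y <= hull_hi j.
Proof.
  split.
  - intros [Hy Hb]. split; auto. intros j Hj. split.
    + destruct (Rle_lt_dec (hull_lo j) y); auto. exfalso.
      apply (Hb (Cantor.to_nat (j, 0%nat))). apply hull_name_ball; auto.
    + destruct (Rle_lt_dec y (hull_hi j)); auto. exfalso.
      apply (Hb (Cantor.to_nat (j, 1%nat))). apply hull_name_ball; auto.
  - intros [Hy Hj]. split; auto. intros n Hn. rewrite <- (Cantor.cancel_to_of n) in Hn.
    destruct (Cantor.of_nat n) as [j side]. apply hull_name_ball in Hn; auto.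
    destruct Hn as [Hx [[_ ?]|[_ ?]]]; specialize (Hj j Hx); lra.
Qed.

Lemma hull_convex u v w : hull u -> hull w -> u <= v <= w -> hull v.
Proof.
  rewrite !hull_spec. intros [Hu Hu'] [Hw Hw'] Hv. split; [lra|].
  intros j Hj. specialize (Hu' j Hj). specialize (Hw' j Hj). lra.
Qed.

(* The supremum of the lower ends lies in every interval. *)
Lemma hull_nonempty : exists y, hull y.
Proof.
  set (Lo := fun z => exists j, hull_lo j <= 1 /\ z = hull_lo j).
  assert (Hb : bound Lo) by (exists 1; intros z [j [Hj ->]]; auto).
  assert (He : exists z, Lo z) by (exists 0, 0%nat; rewrite hull_lo_0; split; lra).
  destruct (completeness Lo Hb He) as [l [Hub Hleast]].
  exists l. apply hull_spec.
  assert (0 <= l) by (apply Hub; exists 0%nat; rewrite hull_lo_0; split; lra).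
  assert (l <= 1) by (apply Hleast; intros z [j [Hj ->]]; auto).
  split; [lra|]. intros j Hj. split.
  - apply Hub. now exists j.
  - apply Hleast. intros z [j' [Hj' ->]]. now apply hull_lo_le_hi.
Qed.

Lemma hull_in_dom_ConC : pdom ConC hull.
Proof.
  destruct hull_nonempty as [y Hy]. exists y.
  split; [exact Hy|]. split; [eauto | apply convex_connected, hull_convex].
Qed.

Lemma hull_sub q A : minus1 hull_entry q ->
  (forall x, A x <-> 0 <= x <= 1 /\ forall n, ~ ball (q n) x) ->
  (exists a, A a) -> connected A -> forall y, hull y -> A y.
Proof.
  intros [s [Hs [Hp Hq]]] HA [a Aa] Hc y Hy.
  destruct (Classical_Prop.classic (A y)) as [|nAy]; auto. exfalso.
  assert (Hmono : forall m m', (m < m')%nat -> (s m < s m')%nat)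
    by (intros; now apply strict_mono_lt_iff).
  pose proof (proj1 (hull_spec y) Hy) as [Hy01 Hhull].
  assert (Hunc : forall j, uncovered j a).
  { intros j. apply HA in Aa as [Ha01 Hout]. split; auto. intros i Hi He Hb.
    apply Hp in He as [m <-]. apply (Hout m). now rewrite Hq, Nat.sub_1_r. }
  assert (Hcover : forall lo hi, (forall t, lo <= t <= hi -> ~ A t) -> 0 <= lo -> hi <= 1 ->
     exists j, forall t, lo <= t <= hi -> ~ uncovered j t).
  { intros lo hi Hnot Hlo Hhi.
    destruct (segment_finite_subcover lo hi (fun n t => ball (q n) t)) as [N HN].
    - intros n x Hx. now apply ball_open.
    - intros x Hx. apply Classical_Prop.NNPP. intros Hno.
      apply (Hnot x Hx), HA. split; [lra|]. intros n Hn. apply Hno; eauto.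
    - exists (s N). intros t Ht [_ Hout]. destruct (HN t Ht) as [n [Hn Hb]].
      apply (Hout (s n)); [now apply Hmono | apply Hp; eauto |].
      now rewrite Hq, Nat.sub_1_r in Hb. }
  destruct (connected_one_side A y Hc nAy) as [Hright|Hleft].
  - destruct (Hcover 0 y) as [j Hj]; [intros t Ht At; specialize (Hright t At); lra | lra | lra|].
    pose proof (uncovered_hull_lo_le1 j a (Hunc j)) as Hx. specialize (Hhull j Hx).
    apply (Hj (hull_lo j)); [|now apply hull_lo_uncovered].
    pose proof (hull_lo_spec j) as [? _]. lra.
  - destruct (Hcover y 1) as [j Hj]; [intros t Ht At; specialize (Hleft t At); lra | lra | lra|].
    pose proof (uncovered_hull_lo_le1 j a (Hunc j)) as Hx. specialize (Hhull j Hx).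
    apply (Hj (hull_hi j)); [|now apply hull_hi_uncovered].
    pose proof (hull_hi_spec j) as [? _]. lra.
Qed.

Lemma hull_solves_ptot_ConC q A y : minus1 hull_entry q -> rep closed_neg q A -> hull y ->
  ptot ConC A y.
Proof.
  intros Hq HA Hy. destruct (Classical_Prop.classic (pdom ConC A)) as [[y0 [_ [Hne Hc]]]|];
    [left | right]; auto.
  split; [exact (hull_sub q A Hq HA Hne Hc y Hy) | auto].
Qed.

End Hull.

Lemma minus1_succ (f : baire) : minus1 (fun n => S (f n)) f.
Proof.
  exists (fun n => n). split; [intros; lia|]. split.
  - intros i. split; [eauto | intros _; discriminate].
  - intros n. lia.
Qed.

Lemma sW_le_pbar (X Y : rep_space) (f : problem X Y) : sW_le f (pbar f).
Proof.
  exists (machine MMinus1), (machine MSucc). intros G _ HG p x Hp [y Hy].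
  assert (Hr : rep (completion X) (fun n => S (p n)) (Some x))
    by (exists p; split; auto using minus1_succ).
  assert (Hdom : pdom (pbar f) (Some x)).
  { exists (Some y). left. split; [exists y; auto | eauto]. }
  destruct (HG _ _ Hr Hdom) as [t [Gt [oy [Hoy [[_ [y' [-> Hy']]]|Hn]]]]].
  - destruct Hoy as [q [Hmq Hq]]. exists q. split; [|eauto].
    exists (fun n => S (p n)), t.
    split; [apply Phi_MSucc | split; [exact Gt | now apply Phi_MMinus1]].
  - exfalso. apply Hn. now exists y.
Qed.

Lemma realizes_of_ptot (X Y : rep_space) (g : problem X Y) G :
  realizes G (ptot g) -> realizes G g.
Proof.
  intros HG p x Hp [y Hy]. destruct (HG p x Hp) as [q [Gq [y' [Hq [Hy'|Hn]]]]].
  - exists y. now left.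
  - eauto.
  - exfalso. apply Hn. now exists y.
Qed.

Lemma sW_le_ptot (X Y U V : rep_space) (f : problem X Y) (g : problem U V) :
  sW_le f g -> sW_le f (ptot g).
Proof.
  intros [eH [eK Hred]]. exists eH, eK. intros G Gf HG.
  apply Hred; auto. now apply realizes_of_ptot.
Qed.

Lemma pbar_ConC_le_ConC : sW_le (pbar ConC) ConC.
Proof.
  exists (machine MSucc), (machine (MHull false false)). intros G _ HG p ox Hp _.
  assert (Hr : rep closed_neg (hull_name false p) (hull false p)) by (intros x; reflexivity).
  destruct (HG _ _ Hr (hull_in_dom_ConC false p)) as [q [Gq [y [Hy [Hyhull _]]]]].
  exists (fun n => S (q n)). split.
  - exists (hull_name false p), q.
    split; [apply (Phi_MHull false false) | split; [exact Gq | apply Phi_MSucc]].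
  - exists (Some y). split; [exists q; auto using minus1_succ|].
    destruct ox as [A|]; simpl; auto. destruct Hp as [q' [Hmq HqA]].
    destruct (hull_solves_ptot_ConC false p q' A y Hmq HqA Hyhull); [left|right]; auto.
    split; [now exists y | eauto].
Qed.

Lemma ptot_ConC_le_pbar_ConC : sW_le (ptot ConC) (pbar ConC).
Proof.
  exists (machine MMinus1), (machine (MHull true true)). intros G _ HG p A HpA _.
  set (r := fun n => S (hull_name true p n)).
  assert (Hr : rep (completion closed_neg) r (Some (hull true p)))
    by (exists (hull_name true p); split; [apply minus1_succ | intros x; reflexivity]).
  assert (Hdom : pdom (pbar ConC) (Some (hull true p))).
  { destruct (hull_in_dom_ConC true p) as [y0 Hy0].
    exists (Some y0). left. split; [exists y0; auto | eauto]. }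
  destruct (HG _ _ Hr Hdom) as [t [Gt [oy [Hoy [[_ [y [-> [Hyhull _]]]]|Hn]]]]].
  - destruct Hoy as [q [Hmq Hq]]. exists q. split.
    + exists r, t.
      split; [apply (Phi_MHull true true) | split; [exact Gt | now apply Phi_MMinus1]].
    + exists y. split; auto.
      exact (hull_solves_ptot_ConC true p p A y (minus1_succ p) HpA Hyhull).
  - exfalso. apply Hn, hull_in_dom_ConC.
Qed.

Theorem proposition6p6 :
  sW_equiv ConC (pbar ConC) /\ sW_equiv (pbar ConC) (ptot ConC).
Proof.
  split; split.
  - apply sW_le_pbar.
  - apply pbar_ConC_le_ConC.
  - apply sW_le_ptot, pbar_ConC_le_ConC.
  - apply ptot_ConC_le_pbar_ConC.
Qed.
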